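(* Impose (A1)–(A6), (A8) and the reverse mean dominance assumption (A9'), and fix $x\in\mathcal X$, $u\in[0,1]$. Write $R(x,u)=\frac{m_1^Y(x,u)}{m_1^S(x,u)}-\frac{m_0^Y(x,u)}{m_0^S(x,u)}$. Then $\Delta^{OO}_{Y^*}(x,u)\le R(x,u)$ in each case below, and moreover: (i) under (A7.1), $\Delta^{OO}_{Y^*}(x,u)\ge\underline y^*-\frac{m_0^Y(x,u)}{m_0^S(x,u)}$; (ii) under (A7.2), $\Delta^{OO}_{Y^*}(x,u)\ge\frac{m_1^Y(x,u)-\overline y^*\Delta_S(x,u)}{m_0^S(x,u)}-\frac{m_0^Y(x,u)}{m_0^S(x,u)}$; (iii) under (A7.3) (sub-case (a) or (b)), $\Delta^{OO}_{Y^*}(x,u)\ge\max\left\{\frac{m_1^Y(x,u)-\overline y^*\Delta_S(x,u)}{m_0^S(x,u)},\underline y^*\right\}-\frac{m_0^Y(x,u)}{m_0^S(x,u)}$; (iv) if $\mathcal Y^*=\mathbb R$, then $-\infty\le\Delta^{OO}_{Y^*}(x,u)\le R(x,u)$.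
   Context: Standing setup. On a common probability space: $X$ (covariates, support $\mathcal X$), $Z$ (instrument, support $\mathcal Z$), $W=(X,Z)$; latent real random variables $U,V$, jointly continuously distributed conditional on $X$, with $U\mid X$ and $V\mid X$ each Uniform$[0,1]$ (their joint dependence unrestricted); real potential outcomes of interest $Y_0^*,Y_1^*$. Given functions $P:\mathcal X\times\mathcal Z\to[0,1]$ and $Q:\{0,1\}\times\mathcal X\to[0,1]$, define the treatment $D=\mathbf 1\{P(W)\ge U\}$, potential selection indicators $S_d=\mathbf 1\{Q(d,X)\ge V\}$ ($d\in\{0,1\}$), selection indicator $S=DS_1+(1-D)S_0$, potential observable outcomes $Y_d=S_dY_d^*$ and observable outcome $Y=DY_1+(1-D)Y_0$. For $x\in\mathcal X$, $u\in[0,1]$, $d\in\{0,1\}$: $m_d^Y(x,u)=\mathbb E[Y_d\mid X=x,U=u]$, $m_d^S(x,u)=\mathbb E[S_d\mid X=x,U=u]$, $\Delta_S(x,u)=m_1^S(x,u)-m_0^S(x,u)$, and $\Delta^{OO}_{Y^*}(x,u)=\mathbb E[Y_1^*-Y_0^*\mid X=x,U=u,S_0=1,S_1=1]$. Ratios appearing are assumed well defined. Assumptions: (A1) $Z$ is independent of $(U,V,Y_0^*,Y_1^* )$ conditional on $X$; (A2) the distribution of $P(W)$ given $X$ is nondegenerate; (A3) $\mathbb E|Y_d^*|<\infty$ and $\mathbb E[(Y_d^* )^2]<\infty$; (A4) $0<\mathbb P[D=1\mid X]<1$; (A5) $X$ is invariant to counterfactual manipulation of treatment; (A6) $Y_0^*,Y_1^*$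 have a common support $\mathcal Y^*\subseteq\mathbb R$; $\underline y^*=\inf\mathcal Y^*$, $\overline y^*=\sup\mathcal Y^*$ (possibly infinite), known. Support cases: (A7.1) $\underline y^*>-\infty$, $\overline y^*=+\infty$, $\mathcal Y^*$ an interval; (A7.2) $\underline y^*=-\infty$, $\overline y^*<\infty$, $\mathcal Y^*$ an interval; (A7.3) both finite and either (a) $\mathcal Y^*$ an interval or (b) $\underline y^*,\overline y^*\in\mathcal Y^*$. (A8) $Q(1,x)>Q(0,x)>0$ for all $x\in\mathcal X$. (A9') (reverse mean dominance) for all $x,u$: $\mathbb E[Y_1^*\mid X=x,U=u,S_0=1,S_1=1]\le\mathbb E[Y_1^*\mid X=x,U=u,S_0=0,S_1=1]$. *)

From HB Require Import structures.
From mathcomp Require Import all_boot all_order all_algebra.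
From mathcomp Require Import all_classical all_reals all_analysis.
From mathcomp Require Import measurable_realfun.
Set Implicit Arguments. Unset Strict Implicit. Unset Printing Implicit Defensive.
Import Order.TTheory GRing.Theory Num.Theory.
Import numFieldNormedType.Exports.
Local Open Scope classical_set_scope.
Local Open Scope ring_scope.

(* The model. [Om] is the underlying probability space with law [Pr];  *)
(* [X : Om -> TX] covariates (TX plays the role of the covariate space *)
(* calX), [Z : Om -> TZ] instrument, [U V] latent, [Y0s Y1s] = Y_0^*,  *)
(* Y_1^*.  Pf = P(.,.), Q = Q(.,.).                                    *)

Definition ind (R : realType) (b : bool) : R := (b%:R)%R.

Definition Dtr (R : realType) d (Om : measurableType d) dx (TX : measurableType dx)
  dz (TZ : measurableType dz) (Pf : TX -> TZ -> R) (X : Om -> TX) (Z : Om -> TZ)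
  (U : Om -> R) : Om -> R :=
  fun w => ind R (U w <= Pf (X w) (Z w)).

Definition Sd (R : realType) d (Om : measurableType d) dx (TX : measurableType dx)
  (Q : bool -> TX -> R) (X : Om -> TX) (V : Om -> R) (b : bool) : Om -> R :=
  fun w => ind R (V w <= Q b (X w)).

Definition Sobs (R : realType) d (Om : measurableType d) dx (TX : measurableType dx)
  dz (TZ : measurableType dz) (Pf : TX -> TZ -> R) (Q : bool -> TX -> R)
  (X : Om -> TX) (Z : Om -> TZ) (U V : Om -> R) : Om -> R :=
  fun w => Dtr Pf X Z U w * Sd Q X V true w + (1 - Dtr Pf X Z U w) * Sd Q X V false w.

Definition Ypot (R : realType) d (Om : measurableType d) dx (TX : measurableType dx)
  (Q : bool -> TX -> R) (X : Om -> TX) (V : Om -> R) (Y0s Y1s : Om -> R)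
  (b : bool) : Om -> R :=
  fun w => Sd Q X V b w * (if b then Y1s w else Y0s w).

Definition Yobs (R : realType) d (Om : measurableType d) dx (TX : measurableType dx)
  dz (TZ : measurableType dz) (Pf : TX -> TZ -> R) (Q : bool -> TX -> R)
  (X : Om -> TX) (Z : Om -> TZ) (U V : Om -> R) (Y0s Y1s : Om -> R) : Om -> R :=
  fun w => Dtr Pf X Z U w * Ypot Q X V Y0s Y1s true w
           + (1 - Dtr Pf X Z U w) * Ypot Q X V Y0s Y1s false w.

Definition Ex (R : realType) d (Om : measurableType d) (mu : {measure set Om -> \bar R})
  (f : Om -> R) : R := fine (\int[mu]_w (f w)%:E).
Definition Pb (R : realType) d (Om : measurableType d) (mu : {measure set Om -> \bar R})
  (A : set Om) : R := fine (mu A).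
Definition Exc (R : realType) d (Om : measurableType d) (mu : {measure set Om -> \bar R})
  (f : Om -> R) (A : set Om) : R := Ex mu (fun w => f w * \1_A w) / Pb mu A.

Definition is_cond_law_X (R : realType) d (Om : measurableType d)
  (Pr : probability Om R) dx (TX : measurableType dx) (X : Om -> TX)
  (kX : R.-pker TX ~> Om) : Prop :=
  forall (A : set Om) (B : set TX), measurable A -> measurable B ->
    Pr (A `&` X @^-1` B) = (\int[Pr]_(w in X @^-1` B) kX (X w) A)%E.

Definition is_cond_law_XU (R : realType) d (Om : measurableType d)
  (Pr : probability Om R) dx (TX : measurableType dx) (X : Om -> TX) (U : Om -> R)
  (kXU : R.-pker (TX * R) ~> Om) : Prop :=
  forall (A : set Om) (B : set TX) (C : set R), measurable A -> measurable B ->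
    measurable C ->
    Pr (A `&` X @^-1` B `&` U @^-1` C) =
      (\int[Pr]_(w in X @^-1` B `&` U @^-1` C) kXU (X w, U w) A)%E.

Definition unif01_under (R : realType) d (Om : measurableType d)
  (mu : {measure set Om -> \bar R}) (W : Om -> R) : Prop :=
  forall B : set R, measurable B ->
    mu (W @^-1` B) = (@lebesgue_measure R) (B `&` `[0%R, 1%R]).

Definition jointly_continuous_under (R : realType) d (Om : measurableType d)
  (mu : {measure set Om -> \bar R}) (U V : Om -> R) : Prop :=
  forall N : set (R * R), measurable N ->
    ((@lebesgue_measure R) \x (@lebesgue_measure R))%E N = 0%E ->
    mu ((fun w => (U w, V w)) @^-1` N) = 0%E.

Definition indep_under (R : realType) d (Om : measurableType d)
  (mu : {measure set Om -> \bar R}) dz (TZ : measurableType dz) (Z : Om -> TZ)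
  (U V Y0s Y1s : Om -> R) : Prop :=
  forall (A : set TZ) (B1 B2 B3 B4 : set R), measurable A -> measurable B1 ->
    measurable B2 -> measurable B3 -> measurable B4 ->
    let E := U @^-1` B1 `&` V @^-1` B2 `&` Y0s @^-1` B3 `&` Y1s @^-1` B4 in
    mu (Z @^-1` A `&` E) = (mu (Z @^-1` A) * mu E)%E.

Definition mY (R : realType) d (Om : measurableType d) dx (TX : measurableType dx)
  (kXU : R.-pker (TX * R) ~> Om) (Q : bool -> TX -> R) (X : Om -> TX)
  (V Y0s Y1s : Om -> R) (b : bool) (x : TX) (u : R) : R :=
  Ex (kXU (x, u)) (Ypot Q X V Y0s Y1s b).

Definition mS (R : realType) d (Om : measurableType d) dx (TX : measurableType dx)
  (kXU : R.-pker (TX * R) ~> Om) (Q : bool -> TX -> R) (X : Om -> TX)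
  (V : Om -> R) (b : bool) (x : TX) (u : R) : R :=
  Ex (kXU (x, u)) (Sd Q X V b).

Definition DeltaS (R : realType) d (Om : measurableType d) dx (TX : measurableType dx)
  (kXU : R.-pker (TX * R) ~> Om) (Q : bool -> TX -> R) (X : Om -> TX)
  (V : Om -> R) (x : TX) (u : R) : R :=
  mS kXU Q X V true x u - mS kXU Q X V false x u.

Definition Sev (R : realType) d (Om : measurableType d) dx (TX : measurableType dx)
  (Q : bool -> TX -> R) (X : Om -> TX) (V : Om -> R) (s0 s1 : R) : set Om :=
  [set w | Sd Q X V false w = s0 /\ Sd Q X V true w = s1].

Definition DeltaOO (R : realType) d (Om : measurableType d) dx (TX : measurableType dx)
  (kXU : R.-pker (TX * R) ~> Om) (Q : bool -> TX -> R) (X : Om -> TX)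
  (V Y0s Y1s : Om -> R) (x : TX) (u : R) : R :=
  Exc (kXU (x, u)) (fun w => Y1s w - Y0s w) (Sev Q X V 1 1).

Definition Rbound (R : realType) d (Om : measurableType d) dx (TX : measurableType dx)
  (kXU : R.-pker (TX * R) ~> Om) (Q : bool -> TX -> R) (X : Om -> TX)
  (V Y0s Y1s : Om -> R) (x : TX) (u : R) : R :=
  mY kXU Q X V Y0s Y1s true x u / mS kXU Q X V true x u
  - mY kXU Q X V Y0s Y1s false x u / mS kXU Q X V false x u.

Definition reverse_mean_dominance (R : realType) d (Om : measurableType d)
  dx (TX : measurableType dx) (kXU : R.-pker (TX * R) ~> Om)
  (Q : bool -> TX -> R) (X : Om -> TX) (V Y1s : Om -> R) : Prop :=
  forall (x : TX) (u : R), (0 <= u <= 1)%R ->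
    (kXU (x, u)).-integrable setT (EFin \o Y1s) ->
    (0 < Pb (kXU (x, u)) (Sev Q X V 1 1))%R ->
    (0 < Pb (kXU (x, u)) (Sev Q X V 0 1))%R ->
    (Exc (kXU (x, u)) Y1s (Sev Q X V 1 1) <= Exc (kXU (x, u)) Y1s (Sev Q X V 0 1))%R.

Definition ylow (R : realType) (Ys : set R) : \bar R := ereal_inf (EFin @` Ys).
Definition yup (R : realType) (Ys : set R) : \bar R := ereal_sup (EFin @` Ys).

From HB Require Import structures.
From mathcomp Require Import all_boot all_order all_algebra.
From mathcomp Require Import all_classical all_reals all_analysis.
From mathcomp Require Import measurable_realfun.
Import Order.TTheory GRing.Theory Num.Theory.
Import numFieldNormedType.Exports.
Local Open Scope classical_set_scope.
Local Open Scope ring_scope.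

(* By monotonicity of selection (A8), S_0 = 1 forces S_1 = 1, so the units with
   S_1 = 1 split into the always-observed ones (S_0 = S_1 = 1, probability
   m_0^S) and the ones observed only under treatment (S_0 = 0, S_1 = 1,
   probability Delta_S).  Hence m_0^Y/m_0^S is the mean of Y_0^* on the
   always-observed, Delta^OO = E[Y_1^* | OO] - m_0^Y/m_0^S, and m_1^Y/m_1^S is
   the mixture of E[Y_1^* | OO] and E[Y_1^* | NO] with weights m_0^S, Delta_S.
   Reverse mean dominance says the first mean is the smaller one, so it lies
   below the mixture: this is the upper bound R.  For the lower bounds,
   E[Y_1^* | OO] is at least the support minimum, and, bounding Y_1^* on the
   NO part by the support maximum, at least (m_1^Y - ybar^* Delta_S)/m_0^S. *)

Lemma mediant_ge (R : realFieldType) (a b x y : R) :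
  0 < a -> 0 < b -> x / a <= y / b -> x / a <= (x + y) / (a + b).
Proof.
move=> a0 b0; rewrite ler_pdivlMr // => xy.
by rewrite ler_pdivlMr ?addr_gt0 // mulrDr divfK ?gt_eqF // lerD2l.
Qed.

Section support_bounds.
Context {R : realType} {Ys : set R}.

Lemma ylow_fin_num y : (-oo < ylow Ys)%E -> Ys y -> ylow Ys \is a fin_num.
Proof.
move=> hl Ysy; apply/fin_numPlt; rewrite hl /=.
by apply: (le_lt_trans _ (ltry y)); apply: ereal_inf_lbound; exists y.
Qed.

Lemma yup_fin_num y : (yup Ys < +oo)%E -> Ys y -> yup Ys \is a fin_num.
Proof.
move=> hu Ysy; apply/fin_numPlt; rewrite hu andbT.
by apply: (lt_le_trans (ltNyr y)); apply: ereal_sup_ubound; exists y.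
Qed.

Lemma fine_ylow_le y : (-oo < ylow Ys)%E -> Ys y -> fine (ylow Ys) <= y.
Proof.
move=> hl Ysy; rewrite -lee_fin fineK; last exact: ylow_fin_num hl Ysy.
by apply: ereal_inf_lbound; exists y.
Qed.

Lemma fine_yup_ge y : (yup Ys < +oo)%E -> Ys y -> y <= fine (yup Ys).
Proof.
move=> hu Ysy; rewrite -lee_fin fineK; last exact: yup_fin_num hu Ysy.
by apply: ereal_sup_ubound; exists y.
Qed.

End support_bounds.

Section expectation.
Context {R : realType} {d} {Om : measurableType d} (mu : {measure set Om -> \bar R}).
Hypothesis mu_fin : (mu setT < +oo)%E.

Lemma Pb_ge0 (A : set Om) : 0 <= Pb mu A.
Proof. exact: fine_ge0. Qed.

Lemma PbE (A : set Om) : measurable A -> mu A = (Pb mu A)%:E.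
Proof.
move=> mA; rewrite /Pb fineK // ge0_fin_numE //.
by apply: le_lt_trans mu_fin; apply: le_measure; rewrite ?inE.
Qed.

Lemma integrable_indic (A : set Om) : measurable A ->
  mu.-integrable setT (fun w => (\1_A w)%:E).
Proof.
move=> mA; apply/integrableP; split; first exact/measurable_EFinP/measurable_indic.
under eq_integral do rewrite gee0_abs ?lee_fin //.
by rewrite integral_indic // setIT PbE // ltry.
Qed.

Lemma integrableZl_fun (c : R) (f : Om -> R) : mu.-integrable setT (EFin \o f) ->
  mu.-integrable setT (EFin \o (fun w => c * f w)).
Proof.
by move=> intf; apply: eq_integrable (integrableZl measurableT c intf).
Qed.

Lemma integrable_mul_indic (f : Om -> R) (A : set Om) : measurable A ->
  mu.-integrable setT (EFin \o f) ->
  mu.-integrable setT (EFin \o (fun w => f w * \1_A w)).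
Proof.
move=> mA intf; apply: (le_integrable measurableT _ _ intf).
  apply/measurable_EFinP; apply: measurable_funM; last exact: measurable_indic.
  exact/measurable_EFinP/(measurable_int _ intf).
move=> w _ /=; rewrite lee_fin normrM indicE.
by case: (w \in A); rewrite ?normr1 ?mulr1 ?normr0 ?mulr0.
Qed.

Lemma ExD (f g : Om -> R) : mu.-integrable setT (EFin \o f) ->
  mu.-integrable setT (EFin \o g) -> Ex mu (fun w => f w + g w) = Ex mu f + Ex mu g.
Proof.
move=> intf intg; rewrite /Ex.
under eq_integral do rewrite EFinD.
by rewrite integralD // fineD //; exact: integrable_fin_num.
Qed.

Lemma ExZl (c : R) (f : Om -> R) : mu.-integrable setT (EFin \o f) ->
  Ex mu (fun w => c * f w) = c * Ex mu f.
Proof.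
move=> intf; rewrite /Ex.
under eq_integral do rewrite EFinM.
by rewrite integralZl // fineM //; exact: integrable_fin_num.
Qed.

Lemma le_Ex (f g : Om -> R) : mu.-integrable setT (EFin \o f) ->
  mu.-integrable setT (EFin \o g) -> (forall w, f w <= g w) -> Ex mu f <= Ex mu g.
Proof.
move=> intf intg fg; apply: fine_le; [exact: integrable_fin_num..|].
by apply: le_integral => // w _; rewrite lee_fin.
Qed.

Lemma Ex_indic (A : set Om) : measurable A -> Ex mu (\1_A) = Pb mu A.
Proof. by move=> mA; rewrite /Ex /Pb integral_indic // setIT. Qed.

Lemma Ex_mul_indic_null (f : Om -> R) (A : set Om) : measurable A ->
  Pb mu A = 0 -> mu.-integrable setT (EFin \o f) ->
  Ex mu (fun w => f w * \1_A w) = 0.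
Proof.
move=> mA PA0 intf; rewrite /Ex.
have -> : (fun w => (f w * \1_A w)%:E) = (EFin \o f) \_ A.
  by apply/funext => w; rewrite /patch indicE; case: (w \in A); rewrite ?mulr1 ?mulr0.
rewrite -integral_mkcond null_set_integral ?PbE ?PA0 //.
exact: measurable_funS (measurable_int _ intf).
Qed.

Lemma Ex_mul_indic_ge (c : R) (f : Om -> R) (A : set Om) : measurable A ->
  mu.-integrable setT (EFin \o f) -> (forall w, c <= f w) ->
  c * Pb mu A <= Ex mu (fun w => f w * \1_A w).
Proof.
move=> mA intf cf; rewrite -Ex_indic // -ExZl; last exact: integrable_indic.
apply: le_Ex; [exact/integrableZl_fun/integrable_indic | exact: integrable_mul_indic|].
by move=> w; apply: ler_wpM2r; rewrite ?indicE ?ler0n.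
Qed.

Lemma Ex_mul_indic_le (c : R) (f : Om -> R) (A : set Om) : measurable A ->
  mu.-integrable setT (EFin \o f) -> (forall w, f w <= c) ->
  Ex mu (fun w => f w * \1_A w) <= c * Pb mu A.
Proof.
move=> mA intf fc; rewrite -Ex_indic // -ExZl; last exact: integrable_indic.
apply: le_Ex; [exact: integrable_mul_indic | exact/integrableZl_fun/integrable_indic|].
by move=> w; apply: ler_wpM2r; rewrite ?indicE ?ler0n.
Qed.

Lemma ExcB (f g : Om -> R) (A : set Om) : measurable A ->
  mu.-integrable setT (EFin \o f) -> mu.-integrable setT (EFin \o g) ->
  Exc mu (fun w => f w - g w) A = Exc mu f A - Exc mu g A.
Proof.
move=> mA intf intg; rewrite /Exc -mulrBl; congr (_ / _).
transitivity (Ex mu (fun w => f w * \1_A w + (-1) * (g w * \1_A w))).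
  by congr Ex; apply/funext => w; rewrite mulN1r mulrBl.
rewrite ExD ?ExZl ?mulN1r //; [exact: integrable_mul_indic..|].
by apply: integrableZl_fun; exact: integrable_mul_indic.
Qed.

Lemma Exc_ge (c : R) (f : Om -> R) (A : set Om) : measurable A ->
  mu.-integrable setT (EFin \o f) -> 0 < Pb mu A -> (forall w, c <= f w) ->
  c <= Exc mu f A.
Proof. by move=> mA intf PA cf; rewrite ler_pdivlMr // Ex_mul_indic_ge. Qed.

End expectation.

Section selection.
Context {R : realType} {d} {Om : measurableType d} {dx} {TX : measurableType dx}
  {Q : bool -> TX -> R} {X : Om -> TX} {V : Om -> R}.
Hypothesis Q_mono : forall x, Q false x <= Q true x.

Let ind_eq1 (b : bool) : ind R b = 1 <-> b.
Proof. by case: b; split => //= /eqP; rewrite /ind /= eq_sym oner_eq0. Qed.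

Let ind_eq0 (b : bool) : ind R b = 0 <-> ~~ b.
Proof. by case: b; split => //= /eqP; rewrite /ind /= oner_eq0. Qed.

Let in_set_bool (P : Om -> bool) w : (w \in [set w | P w]) = P w.
Proof. by apply/idP/idP; rewrite in_setE. Qed.

Lemma Sev11E : Sev Q X V 1 1 = [set w | V w <= Q false (X w)].
Proof.
apply/seteqP; split => w /=; first by case=> /ind_eq1.
by move=> S0; split; apply/ind_eq1 => //; apply: le_trans S0 (Q_mono _).
Qed.

Lemma Sev01E : Sev Q X V 0 1 =
  [set w | V w <= Q true (X w)] `\` [set w | V w <= Q false (X w)].
Proof.
apply/seteqP; split => w [] /=; first by move=> /ind_eq0/negP S0 /ind_eq1.
by move=> S1 /negP S0; split; [exact/ind_eq0 | exact/ind_eq1].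
Qed.

Lemma Sd_false_indic : Sd Q X V false = \1_(Sev Q X V 1 1).
Proof. by apply/funext => w; rewrite Sev11E indicE in_set_bool. Qed.

Lemma Sd_true_indic w :
  Sd Q X V true w = \1_(Sev Q X V 1 1) w + \1_(Sev Q X V 0 1) w.
Proof.
rewrite Sev11E Sev01E !indicE in_setD !in_set_bool /Sd /ind.
have [S0|S0] := boolP (V w <= Q false (X w)); last by rewrite andbT add0r.
by rewrite andbF addr0 (le_trans S0 (Q_mono _)).
Qed.

Hypotheses (mX : measurable_fun setT X) (mV : measurable_fun setT V)
  (mQ : forall b, measurable_fun setT (Q b)).

Let measurable_selected b : measurable [set w | V w <= Q b (X w)].
Proof.
have := measurable_fun_ler mV (measurableT_comp (mQ b) mX) measurableT
  (Y := [set true]) I.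
by rewrite setTI.
Qed.

Lemma measurable_Sev11 : measurable (Sev Q X V 1 1).
Proof. by rewrite Sev11E. Qed.

Lemma measurable_Sev01 : measurable (Sev Q X V 0 1).
Proof. by rewrite Sev01E; apply: measurableD. Qed.

End selection.

Section selected_means.
Context {R : realType} {d} {Om : measurableType d} {dx} {TX : measurableType dx}
  {Q : bool -> TX -> R} {X : Om -> TX} {V Y0s Y1s : Om -> R}
  {mu : {measure set Om -> \bar R}}.
Hypotheses (Q_mono : forall x, Q false x <= Q true x)
  (mX : measurable_fun setT X) (mV : measurable_fun setT V)
  (mQ : forall b, measurable_fun setT (Q b)).
Hypotheses (mu_fin : (mu setT < +oo)%E)
  (int0 : mu.-integrable setT (EFin \o Y0s))
  (int1 : mu.-integrable setT (EFin \o Y1s)).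

Local Notation OO := (Sev Q X V 1 1).
Local Notation NO := (Sev Q X V 0 1).
Let mOO := measurable_Sev11 Q_mono mX mV mQ.
Let mNO := measurable_Sev01 mX mV mQ.

Lemma Ex_Sd_false : Ex mu (Sd Q X V false) = Pb mu OO.
Proof. by rewrite (Sd_false_indic Q_mono) Ex_indic. Qed.

Lemma Ex_Sd_true : Ex mu (Sd Q X V true) = Pb mu OO + Pb mu NO.
Proof.
rewrite (funext (Sd_true_indic Q_mono)) ExD ?Ex_indic //.
all: exact: integrable_indic.
Qed.

Lemma Ex_Ypot_false :
  Ex mu (Ypot Q X V Y0s Y1s false) = Ex mu (fun w => Y0s w * \1_OO w).
Proof. by congr Ex; apply/funext => w; rewrite /Ypot (Sd_false_indic Q_mono) mulrC. Qed.

Lemma Ex_Ypot_true : Ex mu (Ypot Q X V Y0s Y1s true) =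
  Ex mu (fun w => Y1s w * \1_OO w) + Ex mu (fun w => Y1s w * \1_NO w).
Proof.
rewrite -ExD; [|exact: integrable_mul_indic..].
by congr Ex; apply/funext => w; rewrite /Ypot (Sd_true_indic Q_mono) mulrC mulrDr.
Qed.

Lemma Exc_Y0_OO :
  Exc mu Y0s OO = Ex mu (Ypot Q X V Y0s Y1s false) / Ex mu (Sd Q X V false).
Proof. by rewrite Ex_Ypot_false Ex_Sd_false. Qed.

Lemma Exc_Y1_OO_le : 0 < Pb mu OO ->
  (0 < Pb mu NO -> Exc mu Y1s OO <= Exc mu Y1s NO) ->
  Exc mu Y1s OO <= Ex mu (Ypot Q X V Y0s Y1s true) / Ex mu (Sd Q X V true).
Proof.
move=> pOO dominance; rewrite Ex_Ypot_true Ex_Sd_true.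
have [pNO0|pNO_neq0] := eqVneq (Pb mu NO) 0.
  by rewrite pNO0 (Ex_mul_indic_null _ mu_fin Y1s NO) // !addr0.
have pNO : 0 < Pb mu NO by rewrite lt_neqAle eq_sym pNO_neq0 Pb_ge0.
exact/mediant_ge/dominance.
Qed.

Lemma Exc_Y1_OO_ge (c : R) : 0 < Pb mu OO -> (forall w, Y1s w <= c) ->
  (Ex mu (Ypot Q X V Y0s Y1s true)
     - c * (Ex mu (Sd Q X V true) - Ex mu (Sd Q X V false))) / Ex mu (Sd Q X V false)
  <= Exc mu Y1s OO.
Proof.
move=> pOO Y1c; rewrite Ex_Ypot_true Ex_Sd_true Ex_Sd_false [Pb mu OO + _]addrC addrK.
apply: ler_wpM2r; first by rewrite invr_ge0 ltW.
by rewrite -addrA gerDl subr_le0 (Ex_mul_indic_le _ mu_fin).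
Qed.

End selected_means.

Theorem corollaryF1
  (R : realType) (d : measure_display) (Om : measurableType d)
  (Pr : probability Om R)
  (dx : measure_display) (TX : measurableType dx)
  (dz : measure_display) (TZ : measurableType dz)
  (X : Om -> TX) (Z : Om -> TZ) (U V Y0s Y1s : Om -> R)
  (Pf : TX -> TZ -> R) (Q : bool -> TX -> R)
  (kX : R.-pker TX ~> Om) (kXU : R.-pker (TX * R) ~> Om)
  (Ys : set R)
  (* measurability of the primitives *)
  (mX : measurable_fun setT X) (mZ : measurable_fun setT Z)
  (mU : measurable_fun setT U) (mV : measurable_fun setT V)
  (mY0 : measurable_fun setT Y0s) (mY1 : measurable_fun setT Y1s)
  (mPW : measurable_fun setT (fun w => Pf (X w) (Z w)))
  (mQ : forall b, measurable_fun setT (Q b))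
  (* regular conditional laws given X and given (X,U) *)
  (hkX : is_cond_law_X Pr X kX) (hkXU : is_cond_law_XU Pr X U kXU)
  (* U | X and V | X are Uniform[0,1], (U,V) | X jointly continuous *)
  (hU : forall x, unif01_under (kX x) U)
  (hV : forall x, unif01_under (kX x) V)
  (hUV : forall x, jointly_continuous_under (kX x) U V)
  (* (A1) *)
  (A1 : forall x, indep_under (kX x) Z U V Y0s Y1s)
  (* (A2) *)
  (A2 : forall x, ~ exists c : R, kX x [set w | Pf (X w) (Z w) = c] = 1%E)
  (* (A3) *)
  (A3 : forall b : bool, Pr.-integrable setT (EFin \o (if b then Y1s else Y0s)) /\
        Pr.-integrable setT (EFin \o (fun w => (if b then Y1s w else Y0s w) ^+ 2)))
  (* (A4) *)
  (A4 : forall x, (0 < kX x [set w | Dtr Pf X Z U w = 1%R])%E /\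
                  (kX x [set w | Dtr Pf X Z U w = 1%R] < 1)%E)
  (* (A6): Y0*, Y1* have the common support Ys *)
  (A6 : range Y0s = Ys /\ range Y1s = Ys)
  (* (A8) *)
  (A8 : forall x, 0 < Q false x < Q true x)
  (* (A9') *)
  (A9 : reverse_mean_dominance kXU Q X V Y1s)
  (* the fixed point, and well-definedness of the quantities at it *)
  (x : TX) (u : R) (hu : 0 <= u <= 1)
  (int0 : (kXU (x, u)).-integrable setT (EFin \o Y0s))
  (int1 : (kXU (x, u)).-integrable setT (EFin \o Y1s))
  (pos0 : 0 < mS kXU Q X V false x u) :
  let m1Y := mY kXU Q X V Y0s Y1s true x u in
  let m0Y := mY kXU Q X V Y0s Y1s false x u in
  let m0S := mS kXU Q X V false x u in
  let dS := DeltaS kXU Q X V x u in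
  let D := DeltaOO kXU Q X V Y0s Y1s x u in
  let Rxu := Rbound kXU Q X V Y0s Y1s x u in
  (* (i) under (A7.1) *)
  ((-oo < ylow Ys)%E -> yup Ys = +oo%E -> is_interval Ys ->
     D <= Rxu /\ (ylow Ys - (m0Y / m0S)%:E <= D%:E)%E) /\
  (* (ii) under (A7.2) *)
  (ylow Ys = -oo%E -> (yup Ys < +oo)%E -> is_interval Ys ->
     D <= Rxu /\ (m1Y - fine (yup Ys) * dS) / m0S - m0Y / m0S <= D) /\
  (* (iii) under (A7.3) (a) or (b) *)
  ((-oo < ylow Ys)%E -> (yup Ys < +oo)%E ->
     (is_interval Ys \/ (Ys (fine (ylow Ys)) /\ Ys (fine (yup Ys)))) ->
     D <= Rxu /\
     Num.max ((m1Y - fine (yup Ys) * dS) / m0S) (fine (ylow Ys)) - m0Y / m0S <= D) /\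
  (* (iv) Ys = R *)
  (Ys = setT -> (-oo <= D%:E)%E /\ D <= Rxu).
Proof.
move=> m1Y m0Y m0S dS D Rxu.
set mu := kXU (x, u).
have mu_fin : (mu setT < +oo)%E by rewrite prob_kernel ltry.
have Q_mono y : Q false y <= Q true y by have /andP[_ /ltW] := A8 y.
have mOO := measurable_Sev11 Q_mono mX mV mQ.
have pOO : 0 < Pb mu (Sev Q X V 1 1) by rewrite -(Ex_Sd_false Q_mono mX mV mQ).
have [w0 _] : Sev Q X V 1 1 !=set0.
  by apply/set0P; apply: contraTneq pOO => ->; rewrite /Pb measure0 ltxx.
have inYs w : Ys (Y1s w) by rewrite -A6.2; exists w.
have DE : D = Exc mu Y1s (Sev Q X V 1 1) - m0Y / m0S.
  by rewrite /D /DeltaOO -/mu ExcB // (Exc_Y0_OO (Y0s := Y0s) (Y1s := Y1s) Q_mono mX mV mQ).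
have lowerE b : (b - m0Y / m0S <= D) = (b <= Exc mu Y1s (Sev Q X V 1 1)).
  by rewrite DE lerD2r.
have upper : D <= Rxu.
  rewrite DE /Rxu /Rbound lerD2r.
  exact: (Exc_Y1_OO_le Q_mono mX mV mQ mu_fin int1 pOO (A9 x u hu int1 pOO)).
have below_ylow : (-oo < ylow Ys)%E -> fine (ylow Ys) - m0Y / m0S <= D.
  move=> hl; rewrite lowerE; apply: (Exc_ge _ mu_fin) => // w.
  exact: fine_ylow_le _ hl (inYs w).
have below_yup : (yup Ys < +oo)%E -> (m1Y - fine (yup Ys) * dS) / m0S - m0Y / m0S <= D.
  move=> hup; rewrite lowerE.
  apply: (Exc_Y1_OO_ge Q_mono mX mV mQ mu_fin int1 _ pOO) => w.
  exact: fine_yup_ge _ hup (inYs w).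
split; [move=> hl _ _ | split; [move=> _ hup _ | split; [move=> hl hup _ | move=> _]]].
- split => //; rewrite -(fineK (ylow_fin_num _ hl (inYs w0))) -EFinB lee_fin.
  exact: below_ylow.
- by split => //; exact: below_yup.
- split => //; rewrite /Num.max; case: ifP => _; [exact: below_ylow | exact: below_yup].
- by split => //; exact: leNye.
Qed.
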